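(* For any $x\in S\cap\mathbb{R}^n$, either there exists $x'\in S\cap\mathbb{R}^n$ such that $f(x')\le f(x)$ and the tangent digraph $\mathcal{G}(x')$ is connected, or $f$ is not bounded below on $S$.
   Context: $\mathbb{R}_{\max}=\mathbb{R}\cup\{-\infty\}$. Data: $A^\pm=(a^\pm_{i,j})\in\mathbb{R}_{\max}^{m\times n}$, $C=(c_{k,j})\in\mathbb{R}_{\max}^{p\times n}$, $\mu^+\in\mathbb{Z}_{\ge0}^p$, $\mu^-\in\mathbb{Z}_{\ge0}^n$; $A=(a_{i,j})$, $a_{i,j}=\max(a^+_{i,j},a^-_{i,j})$. $f(x)=\sum_k\mu^+_k\max_j(c_{k,j}+x_j)-\sum_j\mu^-_jx_j$; $S=\{x:\max_j(a^+_{i,j}+x_j)\ge\max_j(a^-_{i,j}+x_j)\ \forall i\in[m]\}$. Standing assumptions: each row of $A$ and $C$ has a finite entry; $\sum_k\mu^+_k=\sum_j\mu^-_j$; the undirected graph on $\{u_1..u_p\}\cup[n]\cup\{w_1..w_m\}$ with edges $\{u_k,j\}$ ($c_{k,j}\ne-\infty$) and $\{w_i,j\}$ ($a_{i,j}\ne-\infty$) is connected. The tangent digraph $\mathcal{G}(x)$ has vertices $U=\{u_1..u_p\}$, $V=[n]$, $W=\{w_1..w_m\}$ and edges $E_1(x)=\{(u_k,j):\max_{j'}(c_{k,j'}+x_{j'})=c_{k,j}+x_j\}$, $E_2(x)=\{(w_i,j):\max_{j'}(a_{i,j'}+x_{j'})=a^-_{i,j}+x_j\}$, $E_3(x)=\{(j,w_i):\max_{j'}(a_{i,j'}+x_{j'})=a^+_{i,j}+x_j\}$;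 connectedness refers to its underlying undirected graph. *)

From HB Require Import structures.
From mathcomp Require Import all_boot all_order all_algebra.
From mathcomp Require Import reals constructive_ereal.
Set Implicit Arguments. Unset Strict Implicit. Unset Printing Implicit Defensive.
Import Order.TTheory GRing.Theory Num.Theory.
Local Open Scope ring_scope.
Local Open Scope ereal_scope.

(* An element of R_max = R ∪ {-oo} is represented as [option R]
   (None = -oo); [emb] injects it into the extended reals. *)
Definition emb (R : realType) (a : option R) : \bar R :=
  if a is Some r then r%:E else -oo.

Definition tmax (R : realType) (n : nat) (a : 'I_n -> \bar R) (x : 'I_n -> R)
  : \bar R := \big[Order.max/-oo]_(j < n) (a j + (x j)%:E).

Section Data.
Variables (R : realType) (m n p : nat).
Variables (Ap Am : 'M[option R]_(m, n)) (C : 'M[option R]_(p, n)).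
Variables (mup : 'I_p -> nat) (mum : 'I_n -> nat).

Definition Aent (i : 'I_m) (j : 'I_n) : \bar R :=
  Order.max (emb (Ap i j)) (emb (Am i j)).

Definition rowA i (x : 'I_n -> R) := tmax (Aent i) x.
Definition rowAp i (x : 'I_n -> R) := tmax (fun j => emb (Ap i j)) x.
Definition rowAm i (x : 'I_n -> R) := tmax (fun j => emb (Am i j)) x.
Definition rowC k (x : 'I_n -> R) := tmax (fun j => emb (C k j)) x.

Definition fobj (x : 'I_n -> R) : \bar R :=
  \sum_(k < p) (rowC k x *+ mup k) - (\sum_(j < n) (x j *+ mum j))%R%:E.

Definition inS (x : 'I_n -> R) : Prop :=
  forall i : 'I_m, rowAm i x <= rowAp i x.

(* vertices: inl (inl k) = u_k, inl (inr j) = j, inr i = w_i *)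
Definition vert := ('I_p + 'I_n + 'I_m)%type.

Definition tedge (x : 'I_n -> R) (a b : vert) : bool :=
  match a, b with
  | inl (inl k), inl (inr j) => rowC k x == emb (C k j) + (x j)%:E
  | inr i, inl (inr j) => rowA i x == emb (Am i j) + (x j)%:E
  | inl (inr j), inr i => rowA i x == emb (Ap i j) + (x j)%:E
  | _, _ => false
  end.

Definition tangent_connected (x : 'I_n -> R) : Prop :=
  forall a b : vert, connect (fun u v => tedge x u v || tedge x v u) a b.

Definition sedge (a b : vert) : bool :=
  match a, b with
  | inl (inl k), inl (inr j) => C k j != None
  | inr i, inl (inr j) => (Ap i j != None) || (Am i j != None)
  | _, _ => false
  end.

Definition support_connected : Prop :=
  forall a b : vert, connect (fun u v => sedge u v || sedge v u) a b.

Definition rows_finite : Prop :=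
  (forall i : 'I_m, exists j : 'I_n, (Ap i j != None) || (Am i j != None)) /\
  (forall k : 'I_p, exists j : 'I_n, C k j != None).

End Data.

From HB Require Import structures.
From mathcomp Require Import all_boot all_order all_algebra.
From mathcomp Require Import boolp reals constructive_ereal.
From mathcomp Require Import ring lra zify.
Set Implicit Arguments. Unset Strict Implicit. Unset Printing Implicit Defensive.
Import Order.TTheory GRing.Theory Num.Theory.
Local Open Scope ring_scope.
Local Open Scope ereal_scope.

(* If the tangent digraph G(x) is disconnected, let L be a union of its
   components.  Raising the coordinates x_j, j in L, by t >= 0 raises by t every
   row maximum attained in L and, as long as t stays below the smallest gap
   between a row maximum outside L and a finite entry of that row in a column of
   L, leaves the other row maxima unchanged: every tangent edge survives, x stays
   in S (the a^+ maximum of a row of A lies in the component of that row), and f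
   changes by t * slope L, where slope L = - slope (complement of L) because
   sum mu^+ = sum mu^-.  Choose the side with slope <= 0.  If a finite entry
   crosses into L, taking t equal to the smallest gap creates a new tangent edge
   without increasing f.  Otherwise t is unrestricted, so f is unbounded below
   unless the slope is 0; then the complement has slope 0 too, and the
   connectivity of the support graph yields a finite entry crossing into it.
   Tangent edges only accumulate, so finitely many steps reach a connected
   tangent digraph. *)

Section MaxPlusRow.
Variables (R : realType) (n : nat).
Implicit Types (e : 'I_n -> \bar R) (x y : 'I_n -> R) (D : pred 'I_n) (t : R).

Lemma tmax_ge e x j : e j + (x j)%:E <= tmax e x.
Proof. exact: le_bigmax. Qed.

Lemma tmax_leP e x M : reflect (forall j, e j + (x j)%:E <= M) (tmax e x <= M).
Proof.
apply: (iffP (bigmax_leP _ _ _ _)) => [[_ le_M] j | le_M]; first exact: le_M.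
by split=> [|j _]; [exact: leNye | exact: le_M].
Qed.

Lemma tmax_attained e x (j0 : 'I_n) : exists j, tmax e x = e j + (x j)%:E.
Proof.
rewrite /tmax.
have [j _ ->] := eq_bigmax j0 xpredT (fun j => e j + (x j)%:E) isT (fun i _ => leNye _).
by exists j.
Qed.

Lemma le_tmax e x y : (forall j, x j <= y j)%R -> tmax e x <= tmax e y.
Proof. by move=> le_xy; apply: le_bigmax2 => j _; rewrite leeD2l ?lee_fin. Qed.

Lemma tmax_max e1 e2 x :
  tmax (fun j => Order.max (e1 j) (e2 j)) x = Order.max (tmax e1 x) (tmax e2 x).
Proof. by rewrite /tmax -bigmax_split; apply: eq_bigr => j _; rewrite adde_maxl. Qed.

Definition raise D t x j := (x j + t * (D j)%:R)%R.

Lemma tmax_raise_argmax e D t x (j0 : 'I_n) : (0 <= t)%R ->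
  (forall j, tmax e x = e j + (x j)%:E -> D j) ->
  tmax e (raise D t x) = tmax e x + t%:E.
Proof.
move=> t_ge0 argmaxD; apply/eqP; rewrite eq_le; apply/andP; split.
  apply/tmax_leP => j; rewrite /raise EFinD addeA leeD //; first exact: tmax_ge.
  by rewrite lee_fin; case: (D j); rewrite ?mulr1 ?mulr0.
have [j xj] := tmax_attained e x j0.
by apply: le_trans (tmax_ge e _ j); rewrite xj /raise argmaxD // mulr1 EFinD addeA.
Qed.

Lemma tmax_raise_below e D t x : (0 <= t)%R ->
  (forall j, D j -> e j + (x j + t)%:E <= tmax e x) ->
  tmax e (raise D t x) = tmax e x.
Proof.
move=> t_ge0 belowD; apply/eqP; rewrite eq_le; apply/andP; split.
  apply/tmax_leP => j; rewrite /raise; case: (boolP (D j)) => Dj.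
    by rewrite mulr1 belowD.
  by rewrite mulr0 addr0 tmax_ge.
by apply: le_tmax => j; rewrite /raise lerDl; case: (D j); rewrite ?mulr1 ?mulr0.
Qed.

End MaxPlusRow.

Section TangentDigraph.
Variables (R : realType) (m n p : nat).
Variables (Ap Am : 'M[option R]_(m, n)) (C : 'M[option R]_(p, n)).
Variables (mup : 'I_p -> nat) (mum : 'I_n -> nat).
Hypothesis rows_fin : rows_finite Ap Am C.

Local Notation vert := (vert m n p).
Local Notation tedge := (tedge Ap Am C).
Local Notation inS := (inS Ap Am).
Implicit Types (x : 'I_n -> R) (t : R) (L : {pred vert}) (j : 'I_n).

Definition tadj x : rel vert := fun u v => tedge x u v || tedge x v u.

Lemma tadj_sym x : symmetric (tadj x).
Proof. by move=> u v; rewrite /tadj orbC. Qed.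

Definition rindex := ('I_p + 'I_m)%type.

Definition rentry (r : rindex) : 'I_n -> \bar R :=
  match r with inl k => fun j => emb (C k j) | inr i => Aent Ap Am i end.

Definition rvert (r : rindex) : vert :=
  match r with inl k => inl (inl k) | inr i => inr i end.

Definition cvert (j : 'I_n) : vert := inl (inr j).

Implicit Types (r : rindex) (q : rindex * 'I_n).

Lemma emb_neqNy (o : option R) : (emb o != -oo) = (o != None).
Proof. by case: o. Qed.

Lemma Aent_emb i j : Aent Ap Am i j = emb (Ap i j) \/ Aent Ap Am i j = emb (Am i j).
Proof. by rewrite /Aent; case: leP => _; [right | left]. Qed.

Lemma rentry_fin r j : rentry r j != -oo -> rentry r j \is a fin_num.
Proof.
have [o ->] : exists o, rentry r j = emb o.
  case: r => [k | i] /=; first by exists (C k j).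
  by case: (Aent_emb i j) => ->; eexists.
by case: o.
Qed.

Lemma Aent_neqNy i j : (Aent Ap Am i j != -oo) = (Ap i j != None) || (Am i j != None).
Proof. by rewrite /Aent -ltNye lt_max !ltNye !emb_neqNy. Qed.

Lemma exists_finite_rentry r : exists j, rentry r j != -oo.
Proof.
case: rows_fin => finA finC; case: r => [k | i] /=.
  by have [j Cj] := finC k; exists j; rewrite emb_neqNy.
by have [j Aj] := finA i; exists j; rewrite Aent_neqNy.
Qed.

Lemma tmax_fin r x : tmax (rentry r) x \is a fin_num.
Proof.
have [j rj] := exists_finite_rentry r; have [j' maxj'] := tmax_attained (rentry r) x j.
have := tmax_ge (rentry r) x j; rewrite maxj' fin_numD andbT.
case: (eqVneq (rentry r j') -oo) => [-> | /rentry_fin //].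
by rewrite addNye leeNy_eq adde_eq_ninfty (negbTE rj).
Qed.

Lemma argmax_tadj r j x :
  tmax (rentry r) x = rentry r j + (x j)%:E -> tadj x (rvert r) (cvert j).
Proof.
rewrite /tadj; case: r => [k | i] /= maxj; first by rewrite /rowC maxj eqxx.
by rewrite /rowA maxj; case: (Aent_emb i j) => ->; rewrite eqxx ?orbT.
Qed.

Definition shift L t x := raise (fun j => cvert j \in L) t x.

Definition crossing L q : bool :=
  [&& rvert q.1 \notin L, cvert q.2 \in L & rentry q.1 q.2 != -oo].

Definition gap x q : R :=
  fine (tmax (rentry q.1) x) - (fine (rentry q.1 q.2) + x q.2).

Lemma tmax_gap x q : rentry q.1 q.2 != -oo ->
  tmax (rentry q.1) x = rentry q.1 q.2 + (x q.2 + gap x q)%:E.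
Proof.
move=> /rentry_fin/fineK <-; rewrite -EFinD -[LHS](fineK (tmax_fin q.1 x)) /gap.
by congr _%:E; ring.
Qed.

Lemma le_gap x q t : rentry q.1 q.2 != -oo ->
  (rentry q.1 q.2 + (x q.2 + t)%:E <= tmax (rentry q.1) x) = (t <= gap x q)%R.
Proof.
by move=> q_fin; rewrite (tmax_gap x q_fin) leeD2lE ?rentry_fin // lee_fin lerD2l.
Qed.

Lemma rowA_max i x : rowA Ap Am i x = Order.max (rowAp Ap i x) (rowAm Am i x).
Proof. exact: tmax_max. Qed.

Definition fobjR x : R :=
  \sum_(k < p) fine (rowC C k x) *+ mup k - \sum_(j < n) x j *+ mum j.

Lemma fobjE x : fobj C mup mum x = (fobjR x)%:E.
Proof.
rewrite /fobj /fobjR EFinB; congr (_ - _); rewrite -sumEFin.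
by apply: eq_bigr => k _; rewrite EFin_natmul fineK // (tmax_fin (inl k)).
Qed.

Definition slope L : R :=
  \sum_(k < p) (rvert (inl k) \in L)%:R *+ mup k
  - \sum_(j < n) (cvert j \in L)%:R *+ mum j.

Section Shift.
Variables (x : 'I_n -> R) (L : {pred vert}) (t : R).
Hypotheses (closedL : closed (tadj x) L) (t_ge0 : (0 <= t)%R).
Hypothesis t_le_gap : forall q, crossing L q -> (t <= gap x q)%R.

Lemma tmax_shift r :
  tmax (rentry r) (shift L t x) = tmax (rentry r) x + (t * (rvert r \in L)%:R)%:E.
Proof.
have [j0 _] := exists_finite_rentry r.
case: (boolP (rvert r \in L)) => Lr; rewrite ?mulr1 ?mulr0 ?adde0.
  apply: tmax_raise_argmax j0 t_ge0 _ => j /argmax_tadj /closedL.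
  by rewrite Lr.
apply: tmax_raise_below t_ge0 _ => j Lj.
case: (eqVneq (rentry r j) -oo) => [-> | rj]; first by rewrite addNye leNye.
by rewrite (@le_gap _ (r, j)) // t_le_gap // /crossing Lr Lj.
Qed.

Lemma tmax_shift_argmax r j g : (rvert r \in L) = (cvert j \in L) ->
  tmax (rentry r) x = g + (x j)%:E ->
  tmax (rentry r) (shift L t x) = g + (shift L t x j)%:E.
Proof. by move=> Lrj maxj; rewrite tmax_shift maxj Lrj /shift /raise EFinD addeA. Qed.

Lemma tedge_shift a b : tedge x a b -> tedge (shift L t x) a b.
Proof.
move=> ab; have /closedL Lab : tadj x a b by rewrite /tadj ab.
case: a b ab Lab => [[k | j] | i] [[k' | j'] | i'] //= /eqP maxj Lab; apply/eqP.
- exact: (tmax_shift_argmax (r := inl k)).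
- exact: (tmax_shift_argmax (r := inr i') (esym Lab)).
- exact: (tmax_shift_argmax (r := inr i)).
Qed.

Lemma inS_shift : inS x -> inS (shift L t x).
Proof.
move=> Sx i; have [j0 _] := exists_finite_rentry (inr i).
have [j maxj] := tmax_attained (fun j => emb (Ap i j)) x j0.
have rowA_j : rowA Ap Am i x = emb (Ap i j) + (x j)%:E.
  by rewrite rowA_max (max_idPl (Sx i)) -maxj.
have Lij : (rvert (inr i) \in L) = (cvert j \in L).
  by apply/esym/closedL; rewrite /tadj /= rowA_j eqxx.
have rowA' : rowA Ap Am i (shift L t x) = emb (Ap i j) + (shift L t x j)%:E.
  exact: (tmax_shift_argmax (r := inr i)).
apply: le_trans (_ : rowA Ap Am i (shift L t x) <= _).
  by rewrite rowA_max le_max lexx orbT.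
by rewrite rowA' tmax_ge.
Qed.

Lemma fobjR_shift : fobjR (shift L t x) = (fobjR x + t * slope L)%R.
Proof.
have rowC' k : fine (rowC C k (shift L t x)) =
    (fine (rowC C k x) + t * (rvert (inl k) \in L)%:R)%R.
  by rewrite /rowC (tmax_shift (inl k)) -[tmax _ x](fineK (tmax_fin (inl k) x)).
rewrite /fobjR /slope /shift /raise.
under eq_bigr do rewrite rowC' mulrnDl -mulrnAr.
under [X in (_ - X)%R]eq_bigr do rewrite mulrnDl -mulrnAr.
rewrite !big_split -!mulr_sumr /=; ring.
Qed.

End Shift.

Lemma slope_predC L : (\sum_(k < p) mup k)%N = (\sum_(j < n) mum j)%N ->
  (slope L + slope [predC L] = 0)%R.
Proof.
move=> balanced.
have split_one (v : vert) : ((v \in L)%:R + (v \in [predC L])%:R = 1 :> R)%R.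
  by rewrite [v \in [predC L]]inE; case: (v \in L); rewrite ?addr0 ?add0r.
rewrite /slope addrACA -opprD -!big_split /=.
under eq_bigr do rewrite -mulrnDl split_one.
under [X in (_ - X)%R]eq_bigr do rewrite -mulrnDl split_one.
by rewrite -!natr_sum balanced subrr.
Qed.

Definition tedges x : {set vert * vert} := [set ab | tedge x ab.1 ab.2].

Lemma crossing_improves L x q0 : closed (tadj x) L -> inS x -> (slope L <= 0)%R ->
  crossing L q0 ->
  exists x', [/\ inS x', (fobjR x' <= fobjR x)%R & (#|tedges x| < #|tedges x'|)%N].
Proof.
move=> closedL Sx sL cq0; have [q cq gap_min] := arg_minP (gap x) cq0.
have /and3P[Lq1 Lq2 q_fin] := cq.
have t_ge0 : (0 <= gap x q)%R by rewrite -(le_gap x 0%R q_fin) addr0 tmax_ge.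
have fobjR' := fobjR_shift closedL t_ge0 gap_min.
exists (shift L (gap x q) x); split.
- exact: inS_shift.
- by rewrite fobjR'; have := mulr_ge0_le0 t_ge0 sL; lra.
apply/proper_card/properP; split.
  by apply/subsetP => ab; rewrite !inE; exact: tedge_shift.
have new : tadj (shift L (gap x q) x) (rvert q.1) (cvert q.2).
  apply: argmax_tadj; rewrite (tmax_shift closedL t_ge0 gap_min) (negbTE Lq1).
  by rewrite mulr0 adde0 /shift /raise Lq2 mulr1 -tmax_gap.
have old : ~~ tadj x (rvert q.1) (cvert q.2) by apply: contra Lq1 => /closedL ->.
move: new old; rewrite /tadj negb_or => /orP[e | e] /andP[e1 e2].
  by exists (rvert q.1, cvert q.2); rewrite !inE.
by exists (cvert q.2, rvert q.1); rewrite !inE.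
Qed.

Definition bounded_below : Prop :=
  exists M : R, forall y, inS y -> M%:E <= fobj C mup mum y.

Lemma no_crossing_unbounded L x : closed (tadj x) L -> inS x ->
  (forall q, ~~ crossing L q) -> (slope L < 0)%R -> ~ bounded_below.
Proof.
move=> closedL Sx nocross sL [M leM].
pose t := ((`|fobjR x - M| + 1) / - slope L)%R.
have t_ge0 : (0 <= t)%R.
  by apply: divr_ge0; [exact: addr_ge0 (normr_ge0 _) ler01 | rewrite oppr_ge0 ltW].
have t_le_gap q : crossing L q -> (t <= gap x q)%R by rewrite (negbTE (nocross q)).
have := leM _ (inS_shift closedL t_ge0 t_le_gap Sx).
rewrite fobjE lee_fin (fobjR_shift closedL t_ge0 t_le_gap).
have -> : (t * slope L = - (`|fobjR x - M| + 1))%R.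
  by rewrite /t; field; rewrite lt_eqF.
by have := ler_norm (fobjR x - M); lra.
Qed.

Hypothesis support_conn : support_connected Ap Am C.
Hypothesis balanced : (\sum_(k < p) mup k)%N = (\sum_(j < n) mum j)%N.
Hypothesis bounded : bounded_below.

Lemma crossing_predC L a b : a \in L -> b \notin L ->
  (forall q, ~~ crossing L q) -> exists q, crossing [predC L] q.
Proof.
(* Otherwise no support edge would leave L. *)
move=> La Lb nocross.
case: (pickP (crossing [predC L])) => [q cq | none]; first by exists q.
have row_col r j : rentry r j != -oo -> (rvert r \in L) = (cvert j \in L).
  move=> rj; move: (nocross (r, j)) (none (r, j)); rewrite /crossing /= !inE rj.
  by case: (rvert r \in L); case: (cvert j \in L).
have sedgeL u v : sedge Ap Am C u v -> (u \in L) = (v \in L).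
  case: u v => [[k | j] | i] [[k' | j'] | i'] //= uv.
    by apply: (row_col (inl k)); rewrite /= emb_neqNy.
  by apply: (row_col (inr i)); rewrite /= Aent_neqNy.
have closedL : closed (fun u v => sedge Ap Am C u v || sedge Ap Am C v u) L.
  by move=> u v /orP[/sedgeL | /sedgeL ->].
by move: (closed_connect closedL (support_conn a b)); rewrite La (negbTE Lb).
Qed.

Lemma disconnected_improves L a b x :
  closed (tadj x) L -> a \in L -> b \notin L -> inS x ->
  exists x', [/\ inS x', (fobjR x' <= fobjR x)%R & (#|tedges x| < #|tedges x'|)%N].
Proof.
move=> + + + Sx; wlog sL : L a b / (slope L <= 0)%R => [W closedL La Lb | closedL La Lb].
  case: (lerP (slope L) 0) => sL; first exact: W sL closedL La Lb.
  apply: (W [predC L] b a); rewrite ?inE ?La ?Lb //; last exact: predC_closed.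
  by have := slope_predC L balanced; lra.
case: (pickP (crossing L)) => [q cq | nocross]; first exact: crossing_improves cq.
have {}nocross q : ~~ crossing L q by rewrite nocross.
case: (ltrP (slope L) 0) => [sLlt | sLge].
  by have := no_crossing_unbounded closedL Sx nocross sLlt.
have [q cq] := crossing_predC La Lb nocross.
apply: crossing_improves (predC_closed closedL) Sx _ cq.
by have := slope_predC L balanced; lra.
Qed.

Lemma tangent_connected_improvement x : inS x ->
  exists x', [/\ inS x', (fobjR x' <= fobjR x)%R & tangent_connected Ap Am C x'].
Proof.
have [k] := ubnP (#|[set: vert * vert]| - #|tedges x|).
elim: k x => // k IH x lt_k Sx.
have [conn | /forallPn[a /forallPn[b not_ab]]] :=
  boolP [forall a, forall b, connect (tadj x) a b].
  by exists x; split=> // a b; move/forallP/(_ a)/forallP: conn.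
have closed_a := connect_closed (sym_connect_sym (tadj_sym x)) a.
have [x1 [Sx1 le_x1 more]] := disconnected_improves closed_a (connect0 _ a) not_ab Sx.
have [|x' [Sx' le_x' conn']] := IH x1 _ Sx1.
  by have := subset_leq_card (subsetT (tedges x1)); lia.
by exists x'; split=> //; apply: le_trans le_x1.
Qed.

End TangentDigraph.

Theorem proposition4p2 (R : realType) (m n p : nat)
  (Ap Am : 'M[option R]_(m, n)) (C : 'M[option R]_(p, n))
  (mup : 'I_p -> nat) (mum : 'I_n -> nat) :
  rows_finite Ap Am C ->
  (\sum_(k < p) mup k)%N = (\sum_(j < n) mum j)%N ->
  support_connected Ap Am C ->
  forall x : 'I_n -> R, inS Ap Am x ->
    (exists x' : 'I_n -> R,
        [/\ inS Ap Am x', fobj C mup mum x' <= fobj C mup mum x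
          & tangent_connected Ap Am C x'])
    \/ ~ (exists M : R, forall y : 'I_n -> R, inS Ap Am y -> M%:E <= fobj C mup mum y).
Proof.
move=> rows_fin balanced support_conn x Sx.
have [bounded | unbounded] := pselect (bounded_below Ap Am C mup mum); last by right.
left; have [x' [Sx' le_x' conn']] :=
  tangent_connected_improvement rows_fin support_conn balanced bounded Sx.
by exists x'; rewrite !(fobjE _ _ rows_fin) lee_fin.
Qed.
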